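(* Let $$L=\widehat{\operatorname{Sym}_L}+a_{20}D_x^2+a_{11}D_xD_y+a_{02}D_y^2+a_{10}D_x+a_{01}D_y+a_{00},$$ with all $a_{ij}\in K$. (1) If $\operatorname{Sym}_L=XY(X+Y)$, so $\widehat{\operatorname{Sym}_L}=D_x^2D_y+D_xD_y^2$, then $$\Big(a_{02}^2-a_{11}a_{02}+a_{01}+\partial_x(a_{02}-a_{11})\Big)D_y+a_{00}-a_{02}a_{10}+a_{02}^2a_{20}+2a_{02}\partial_x(a_{20})-\partial_x(a_{10})+a_{20}\partial_x(a_{02})+\partial_x^2(a_{20})$$ is a common obstacle to factorization of $L$ of type $(X)(YX+YY)$. (2) If $\operatorname{Sym}_L=X^2Y$, so $\widehat{\operatorname{Sym}_L}=D_x^2D_y$, then $$\Big(a_{10}-a_{20}a_{11}-\partial_y(a_{11})\Big)D_x+a_{00}-a_{20}a_{01}+a_{20}^2a_{02}+2a_{20}\partial_y(a_{02})-\partial_y(a_{01})+a_{02}\partial_y(a_{20})+\partial_y^2(a_{02})$$ is a common obstacle to factorization of $L$ of type $(Y)(XX)$.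
   Context: $K$ is a field with two commuting derivations $\partial_x,\partial_y$, and $K[D_x,D_y]$ is the ring of linear differential operators over $K$: $D_xD_y=D_yD_x$, $D_x\circ f=fD_x+\partial_x(f)$ and $D_y\circ f=fD_y+\partial_y(f)$ for $f\in K$. For an operator $M=\sum m_{ij}D_x^iD_y^j$, $\operatorname{ord}(M)$ is the largest $i+j$ with $m_{ij}\ne0$ ($\operatorname{ord}(0)=-\infty$), and the symbol is $\operatorname{Sym}_M=\sum_{i+j=\operatorname{ord}M}m_{ij}X^iY^j$. For a homogeneous polynomial $S=\sum s_{ij}X^iY^j$, $\widehat S=\sum s_{ij}D_x^iD_y^j$. A factorization of type $(S_1)(S_2)$ of $M$ is $M=F_1\circ F_2$ with $\operatorname{Sym}_{F_i}=S_i$. A common obstacle to factorization of $L$ of type $(S_1)(S_2)$ is an operator $R$ such that $L-R$ has a factorization of that type and $R$ has minimal possible order among such operators. *)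

From HB Require Import structures.
From mathcomp Require Import all_boot all_order all_algebra.
Set Implicit Arguments. Unset Strict Implicit. Unset Printing Implicit Defensive.
Import Order.TTheory GRing.Theory Num.Theory.
Local Open Scope ring_scope.

Definition is_derivation (K : fieldType) (d : K -> K) : Prop :=
  (forall a b, d (a + b) = d a + d b) /\ (forall a b, d (a * b) = d a * b + a * d b).

(* Linear differential operators M = sum_{i,j} m_ij D_x^i D_y^j over K are
   represented in normal form (coefficients on the left) by M : {poly {poly K}},
   with  m_ij = (M`_i)`_j  (outer index = power of D_x, inner = power of D_y).
   Homogeneous polynomials S = sum s_ij X^i Y^j in K[X,Y] use the same
   representation, so \hat S is literally the same data. *)
Definition op (K : fieldType) := {poly {poly K}}.

Definition opcoef (K : fieldType) (M : op K) (i j : nat) : K := (M`_i)`_j.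

Definition mono (K : fieldType) (c : K) (i j : nat) : op K := (c *: 'X^j)%:P * 'X^i.

(* Composition of operators, using
   (a D_x^i D_y^j) o (b D_x^p D_y^q)
     = sum_{k<=i, l<=j} C(i,k) C(j,l) a dx^(i-k) dy^(j-l)(b) D_x^(k+p) D_y^(l+q). *)
Definition opmul (K : fieldType) (dx dy : K -> K) (M N : op K) : op K :=
  \sum_(i < size M) \sum_(j < size M`_i) \sum_(p < size N) \sum_(q < size N`_p)
   \sum_(k < i.+1) \sum_(l < j.+1)
     mono (opcoef M i j * 'C(i, k)%:R * 'C(j, l)%:R
             * iter (i - k) dx (iter (j - l) dy (opcoef N p q)))
          (k + p) (l + q).

(* i+j maximal over nonzero coefficients (0 for the zero operator) *)
Definition ordn (K : fieldType) (M : op K) : nat :=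
  \max_(i < size M) \max_(j < size (M`_i)%R | opcoef M i j != 0%R) (i + j)%N.

(* ord M : None stands for -infinity (M = 0), Some n for order n *)
Definition ord (K : fieldType) (M : op K) : option nat :=
  if M == 0 then None else Some (ordn M).

Definition ord_le (a b : option nat) : bool :=
  match a, b with
  | None, _ => true
  | Some _, None => false
  | Some m, Some n => (m <= n)%N
  end.

Definition Sym (K : fieldType) (M : op K) : op K :=
  \sum_(i < size M) \sum_(j < size M`_i | (i + j == ordn M)%N) mono (opcoef M i j) i j.

Definition hat (K : fieldType) (S : op K) : op K := S.

Definition has_fact_type (K : fieldType) (dx dy : K -> K) (S1 S2 M : op K) : Prop :=
  exists F1 F2 : op K, M = opmul dx dy F1 F2 /\ Sym F1 = S1 /\ Sym F2 = S2.

Definition common_obstacle (K : fieldType) (dx dy : K -> K) (S1 S2 L R : op K) : Prop :=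
  has_fact_type dx dy S1 S2 (L - R) /\
  forall R' : op K, has_fact_type dx dy S1 S2 (L - R') -> ord_le (ord R) (ord R').

Definition pX (K : fieldType) : op K := mono 1 1 0.
Definition pY (K : fieldType) : op K := mono 1 0 1.

From HB Require Import structures.
From mathcomp Require Import all_boot all_order all_algebra.
From mathcomp Require Import ring zify.
Import GRing.Theory.
Local Open Scope ring_scope.
Set Implicit Arguments.
Unset Strict Implicit.
Unset Printing Implicit Defensive.

(* Both factorization types have a left factor of order one and a right factor whose
   symbol is homogeneous of order two, so every factorization reads
   (S1 + c)(S2 + e10 D_x + e01 D_y + e00), and composing gives the coefficients of
   the product explicitly.  Matching them with those of L, the coefficients of order
   three and two determine c, e10 and e01, and one first-order coefficient determines
   e00; the other first-order coefficient and the constant term of L are then out of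
   reach, and their defects form the obstacle R.  Hence L - R factorizes, while an R'
   with L - R' factorizable either has order at least one or is a constant, and in
   the latter case the same matching forces R' = R. *)

Lemma sum_delta (R : zmodType) n (P : pred nat) (F : nat -> R) (u : nat) :
  \sum_(i < n | P i) (if u == i then F i else 0) = if (u < n)%N && P u then F u else 0.
Proof.
rewrite -big_mkcondr -(@big_ord1_cond_eq _ 0 +%R F P u n).
by apply: eq_bigl => i; rewrite eq_sym.
Qed.

Lemma sum2_delta (R : zmodType) n (m : nat -> nat) (P : nat -> nat -> bool)
    (F : nat -> nat -> R) (u v : nat) :
  \sum_(i < n) \sum_(j < m i | P i j) (if (u == i) && (v == j) then F i j else 0)
  = if (u < n)%N && ((v < m u)%N && P u v) then F u v else 0.
Proof.
transitivity (\sum_(i < n)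
    (if u == i then \sum_(j < m i | P i j) (if v == j then F i j else 0) else 0)).
  by apply: eq_bigr => i _; case: (u == i); rewrite // big1.
rewrite (@sum_delta _ n xpredT (fun i => \sum_(j < m i | P i j) (if v == j then F i j else 0))).
by rewrite andbT; case: (u < n)%N; rewrite // sum_delta.
Qed.

Lemma sum_ord_widen (R : zmodType) n B (F : nat -> R) : (n <= B)%N ->
  (forall i, (n <= i)%N -> F i = 0) -> \sum_(i < n) F i = \sum_(i < B) F i.
Proof.
move=> nB F0; rewrite -!(big_mkord xpredT F) [RHS](@big_cat_nat _ _ _ n 0 B _ _ (leq0n n) nB) /=.
by rewrite [X in _ + X]big_nat_cond [X in _ + X]big1 ?addr0 // => i /andP[/andP[/F0]].
Qed.

Section Coefficients.
Variable K : fieldType.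
Implicit Types (M N : op K) (a b : K).

Lemma opP M N : (forall u v, opcoef M u v = opcoef N u v) -> M = N.
Proof. by move=> eqMN; apply/polyP => u; apply/polyP => v; apply: eqMN. Qed.

Lemma opcoef0 u v : opcoef (0 : op K) u v = 0.
Proof. by rewrite /opcoef !coef0. Qed.

Lemma opcoefD M N u v : opcoef (M + N) u v = opcoef M u v + opcoef N u v.
Proof. by rewrite /opcoef !coefD. Qed.

Lemma opcoefB M N u v : opcoef (M - N) u v = opcoef M u v - opcoef N u v.
Proof. by rewrite /opcoef !coefB. Qed.

Lemma opcoef_sum I (r : seq I) (P : pred I) (F : I -> op K) u v :
  opcoef (\sum_(i <- r | P i) F i) u v = \sum_(i <- r | P i) opcoef (F i) u v.
Proof. by rewrite /opcoef !coef_sum. Qed.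

Lemma opcoef_mono a i j u v :
  opcoef (mono a i j) u v = if (u == i) && (v == j) then a else 0.
Proof.
rewrite /opcoef /mono coefMXn; have [->|neq_ui] := eqVneq u i.
  by rewrite ltnn subnn coefC eqxx coefZ coefXn; case: (v == j); rewrite ?mulr1 ?mulr0.
case: ltnP => [|le_iu]; first by rewrite coef0.
have lt_iu : (i < u)%N by rewrite ltn_neqAle eq_sym neq_ui.
by rewrite coefC subn_eq0 leqNgt lt_iu coef0.
Qed.

Lemma opcoef_default M u v :
  (size M <= u)%N || leq (size M`_u) v -> opcoef M u v = 0.
Proof.
rewrite /opcoef => /orP[Mu|Muv]; first by rewrite (nth_default _ Mu) coef0.
by rewrite (nth_default _ Muv).
Qed.

Lemma mono0 i j : mono (0 : K) i j = 0.
Proof. by rewrite /mono scale0r mul0r. Qed.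

Lemma monoD a b i j : mono (a + b) i j = mono a i j + mono b i j.
Proof. by rewrite /mono scalerDl polyCD mulrDl. Qed.

Lemma monoB a b i j : mono (a - b) i j = mono a i j - mono b i j.
Proof. by rewrite /mono scalerBl polyCB mulrBl. Qed.

Lemma mono_mul a b i j p q : mono a i j * mono b p q = mono (a * b) (i + p) (j + q).
Proof.
rewrite /mono mulrACA -polyCM -exprD; congr (_ %:P * _).
by rewrite -scalerAl -scalerAr scalerA -exprD.
Qed.

End Coefficients.

(* From here on operators are only handled through the coefficient lemmas above;
   opacity stops unification from unfolding them into polynomial arithmetic. *)
#[local] Opaque opcoef mono.

Section Order.
Variable K : fieldType.
Implicit Types (M N S F : op K) (a : K).

Lemma leq_ordn M i j : opcoef M i j != 0 -> (i + j <= ordn M)%N.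
Proof.
move=> nzM; have lt_i : (i < size M)%N.
  by rewrite ltnNge; apply: contra nzM => le; rewrite opcoef_default ?le.
have lt_j : leq j.+1 (size M`_i).
  by rewrite ltnNge; apply: contra nzM => le; rewrite opcoef_default ?le ?orbT.
apply: leq_trans (leq_bigmax (Ordinal lt_i)).
exact: (@leq_bigmax_cond _ _ _ (Ordinal lt_j)).
Qed.

Lemma ordn_leq M n :
  (forall i j, opcoef M i j != 0 -> (i + j <= n)%N) -> (ordn M <= n)%N.
Proof. by move=> le_n; apply/bigmax_leqP => i _; apply/bigmax_leqP => j /le_n. Qed.

Lemma opcoef_Sym M u v :
  opcoef (Sym M) u v = if (u + v == ordn M)%N then opcoef M u v else 0.
Proof.
rewrite /Sym opcoef_sum; under eq_bigr do rewrite opcoef_sum.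
under eq_bigr do under eq_bigr do rewrite opcoef_mono.
rewrite (@sum2_delta _ (size M) (fun i => size M`_i) (fun i j => i + j == ordn M)%N).
case: ltnP => [_|le_u]; last by case: ifP; rewrite // opcoef_default ?le_u.
case: ltnP => [_|le_v]; last by case: ifP; rewrite // opcoef_default ?le_v ?orbT.
by [].
Qed.

Definition homog n M := forall u v, (u + v != n)%N -> opcoef M u v = 0.
Definition ord_lt n M := forall u v, (n <= u + v)%N -> opcoef M u v = 0.

Lemma homog_mono n a i j : (i + j)%N = n -> homog n (mono a i j).
Proof.
move=> <- u v ne; rewrite opcoef_mono.
by case: eqP => [eu|] //; case: eqP => [ev|] //; rewrite -eu -ev eqxx in ne.
Qed.

Lemma homogD n M N : homog n M -> homog n N -> homog n (M + N).
Proof. by move=> hM hN u v ne; rewrite opcoefD (hM u v) ?(hN u v) ?addr0. Qed.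

Lemma ord_lt_mono n a i j : (i + j < n)%N -> ord_lt n (mono a i j).
Proof.
move=> lt_n u v le_n; rewrite opcoef_mono.
by case: eqP => [eu|] //; case: eqP => [ev|] //; move: lt_n; rewrite -eu -ev ltnNge le_n.
Qed.

Lemma ord_ltD n M N : ord_lt n M -> ord_lt n N -> ord_lt n (M + N).
Proof. by move=> lM lN u v le; rewrite opcoefD (lM u v) ?(lN u v) ?addr0. Qed.

Lemma ordn_homogD n S M i j : homog n S -> opcoef S i j != 0 -> ord_lt n M ->
  ordn (S + M) = n.
Proof.
move=> hS nzS lM; have ij_n : (i + j)%N = n by apply/eqP; apply: contraNT nzS => /hS ->.
have coefSM u v : (n <= u + v)%N -> opcoef (S + M) u v = opcoef S u v.
  by move=> le; rewrite opcoefD (lM u v) ?addr0.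
apply/eqP; rewrite eqn_leq; apply/andP; split.
  apply: ordn_leq => u v; rewrite leqNgt; apply: contraNN => lt_uv.
  by rewrite coefSM ?(ltnW lt_uv) // (hS u v) // gtn_eqF.
by rewrite -[X in (X <= _)%N]ij_n leq_ordn // coefSM ?ij_n.
Qed.

Lemma Sym_homogD n S M i j : homog n S -> opcoef S i j != 0 -> ord_lt n M ->
  Sym (S + M) = S.
Proof.
move=> hS nzS lM; apply: opP => u v.
rewrite opcoef_Sym (ordn_homogD hS nzS lM); case: eqP => [e|/eqP ne].
  by rewrite opcoefD (lM u v) ?e // addr0.
by rewrite (hS u v).
Qed.

Lemma ord_lt_subSym n S F i j : homog n S -> opcoef S i j != 0 -> Sym F = S ->
  ord_lt n (F - S).
Proof.
move=> hS nzS SymF; have ij_n : (i + j)%N = n by apply/eqP; apply: contraNT nzS => /hS ->.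
have ordF : ordn F = n.
  by move: nzS; rewrite -SymF opcoef_Sym; case: (i + j =P ordn F) => [<- _ //|_]; rewrite eqxx.
move=> u v le_n; rewrite opcoefB; have [e|ne] := eqVneq (u + v)%N n.
  by rewrite -SymF opcoef_Sym ordF e eqxx subrr.
rewrite (hS u v) // subr0; apply/eqP; apply: contraT => /leq_ordn.
by rewrite ordF => le_uv; move: ne; rewrite eqn_leq le_uv le_n.
Qed.

Lemma ord_lt1E M : ord_lt 1 M -> M = mono (opcoef M 0 0) 0 0.
Proof.
move=> lM; apply: opP => u v; rewrite opcoef_mono.
by case: u v => [|u] [|v] //=; rewrite (lM _ _).
Qed.

Lemma ord_lt2E M : ord_lt 2 M ->
  M = mono (opcoef M 1 0) 1 0 + mono (opcoef M 0 1) 0 1 + mono (opcoef M 0 0) 0 0.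
Proof.
move=> lM; apply: opP => u v; rewrite !opcoefD !opcoef_mono.
by case: u v => [|[|u]] [|[|v]] /=; rewrite ?addr0 ?add0r // (lM _ _) // addnS.
Qed.

Lemma ord_lt_ordn M : ord_lt (ordn M).+1 M.
Proof. by move=> u v lt; apply/eqP; apply: contraT => /leq_ordn; rewrite leqNgt lt. Qed.

Lemma ordn_ord_lt n M : ord_lt n.+1 M -> (ordn M <= n)%N.
Proof.
by move=> lM; apply: ordn_leq => u v; apply: contraR; rewrite -ltnNge => /lM ->.
Qed.

Lemma ordn0 : ordn (0 : op K) = 0%N.
Proof. by apply/eqP; rewrite -leqn0 ordn_ord_lt // => u v _; rewrite opcoef0. Qed.

Lemma Sym_eq_order1 F S i j : homog 1 S -> opcoef S i j != 0 ->
  Sym F = S <-> exists c, F = S + mono c 0 0.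
Proof.
move=> hS nzS; split=> [SymF|[c ->]].
  have /ord_lt1E FSE := ord_lt_subSym hS nzS SymF.
  by exists (opcoef (F - S) 0 0); rewrite -FSE addrC subrK.
by apply: Sym_homogD hS nzS _; apply: ord_lt_mono.
Qed.

Lemma Sym_eq_order2 F S i j : homog 2 S -> opcoef S i j != 0 ->
  Sym F = S <-> exists e10 e01 e00, F = S + mono e10 1 0 + mono e01 0 1 + mono e00 0 0.
Proof.
move=> hS nzS; split=> [SymF|[e10 [e01 [e00 ->]]]].
  have /ord_lt2E FSE := ord_lt_subSym hS nzS SymF.
  exists (opcoef (F - S) 1 0), (opcoef (F - S) 0 1), (opcoef (F - S) 0 0).
  by rewrite -!addrA [X in S + X]addrA -FSE addrC subrK.
rewrite -!addrA; apply: Sym_homogD hS nzS _.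
by apply: ord_ltD; [|apply: ord_ltD]; apply: ord_lt_mono.
Qed.

End Order.

Section Derivation.
Variables (K : fieldType) (d : K -> K).
Hypothesis hd : is_derivation d.

Lemma derD a b : d (a + b) = d a + d b. Proof. exact: hd.1. Qed.
Lemma derM a b : d (a * b) = d a * b + a * d b. Proof. exact: hd.2. Qed.

Lemma der0 : d 0 = 0.
Proof. by apply: (addrI (d 0)); rewrite -derD !addr0. Qed.

Lemma derN a : d (- a) = - d a.
Proof. by apply: (addrI (d a)); rewrite -derD !subrr der0. Qed.

Lemma der1 : d 1 = 0.
Proof. by apply: (addIr (d 1)); rewrite add0r -{3}[1]mulr1 derM mulr1 mul1r. Qed.

Lemma iter_der0 n : iter n d 0 = 0.
Proof. by elim: n => //= n ->; rewrite der0. Qed.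

Lemma iter_derD n a b : iter n d (a + b) = iter n d a + iter n d b.
Proof. by elim: n => //= n ->; rewrite derD. Qed.

End Derivation.

Section Composition.
Variables (K : fieldType) (dx dy : K -> K).
Hypotheses (hdx : is_derivation dx) (hdy : is_derivation dy).
Implicit Types (M N : op K) (a b c : K).

Definition leibniz a b (i j p q : nat) : op K :=
  \sum_(k < i.+1) \sum_(l < j.+1)
     mono (a * 'C(i, k)%:R * 'C(j, l)%:R * iter (i - k) dx (iter (j - l) dy b))
          (k + p) (l + q).

Lemma leibniz0l b i j p q : leibniz 0 b i j p q = 0.
Proof. by rewrite /leibniz big1 // => k _; rewrite big1 // => l _; rewrite !mul0r mono0. Qed.

Lemma leibniz0r a i j p q : leibniz a 0 i j p q = 0.
Proof.
rewrite /leibniz big1 // => k _; rewrite big1 // => l _.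
by rewrite (iter_der0 hdy) (iter_der0 hdx) mulr0 mono0.
Qed.

Lemma leibnizDl a1 a2 b i j p q :
  leibniz (a1 + a2) b i j p q = leibniz a1 b i j p q + leibniz a2 b i j p q.
Proof.
rewrite /leibniz -big_split; apply: eq_bigr => k _; rewrite -big_split; apply: eq_bigr => l _.
by rewrite !mulrDl monoD.
Qed.

Lemma leibnizDr a b1 b2 i j p q :
  leibniz a (b1 + b2) i j p q = leibniz a b1 i j p q + leibniz a b2 i j p q.
Proof.
rewrite /leibniz -big_split; apply: eq_bigr => k _; rewrite -big_split; apply: eq_bigr => l _.
by rewrite (iter_derD hdy) (iter_derD hdx) mulrDr monoD.
Qed.

Lemma opmul_leibniz M N : opmul dx dy M N =
  \sum_(i < size M) \sum_(j < size M`_i) \sum_(p < size N) \sum_(q < size N`_p)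
    leibniz (opcoef M i j) (opcoef N p q) i j p q.
Proof. by []. Qed.

Definition size_bound M : nat := (size M + \max_(i < size M) size (M`_i)%R)%N.

Lemma sum_opcoef_widen M B (G : nat -> nat -> op K) : (size_bound M <= B)%N ->
  (forall i j, opcoef M i j = 0 -> G i j = 0) ->
  \sum_(i < size M) \sum_(j < size M`_i) G i j = \sum_(i < B) \sum_(j < B) G i j.
Proof.
move=> le_B G0; have le_sizeM : (size M <= B)%N := leq_trans (leq_addr _ _) le_B.
rewrite (sum_ord_widen (F := fun i => \sum_(j < size M`_i) G i j) le_sizeM); last first.
  by move=> i le_i; rewrite nth_default // size_poly0 big_ord0.
apply: eq_bigr => i _; apply: sum_ord_widen => [|j le_j]; last first.
  by apply: G0; rewrite opcoef_default // le_j orbT.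
case: (ltnP i (size M)) => [lt_i|le_i]; last by rewrite nth_default // size_poly0.
apply: leq_trans le_B; apply: leq_trans (leq_addl _ _).
exact: (leq_bigmax (F := fun i : 'I_(size M) => size M`_i) (Ordinal lt_i)).
Qed.

Lemma opmulE M N B : (size_bound M <= B)%N -> (size_bound N <= B)%N ->
  opmul dx dy M N = \sum_(i < B) \sum_(j < B) \sum_(p < B) \sum_(q < B)
    leibniz (opcoef M i j) (opcoef N p q) i j p q.
Proof.
move=> le_MB le_NB; rewrite opmul_leibniz (sum_opcoef_widen (G := fun i j =>
  \sum_(p < size N) \sum_(q < size N`_p) leibniz (opcoef M i j) (opcoef N p q) i j p q) le_MB).
  apply: eq_bigr => i _; apply: eq_bigr => j _.
  apply: (sum_opcoef_widen (G := fun p q => leibniz _ (opcoef N p q) i j p q) le_NB).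
  by move=> p q ->; apply: leibniz0r.
by move=> i j ->; rewrite big1 // => p _; rewrite big1 // => q _; apply: leibniz0l.
Qed.

Lemma opmulDl M1 M2 N : opmul dx dy (M1 + M2) N = opmul dx dy M1 N + opmul dx dy M2 N.
Proof.
pose B := (size_bound M1 + size_bound M2 + size_bound (M1 + M2)%R + size_bound N)%N.
rewrite !(opmulE (B := B)); try (rewrite /B; lia).
rewrite -big_split; apply: eq_bigr => i _; rewrite -big_split; apply: eq_bigr => j _.
rewrite -big_split; apply: eq_bigr => p _; rewrite -big_split; apply: eq_bigr => q _.
by rewrite opcoefD leibnizDl.
Qed.

Lemma opmulDr M N1 N2 : opmul dx dy M (N1 + N2) = opmul dx dy M N1 + opmul dx dy M N2.
Proof.
pose B := (size_bound M + size_bound N1 + size_bound N2 + size_bound (N1 + N2)%R)%N.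
rewrite !(opmulE (B := B)); try (rewrite /B; lia).
rewrite -big_split; apply: eq_bigr => i _; rewrite -big_split; apply: eq_bigr => j _.
rewrite -big_split; apply: eq_bigr => p _; rewrite -big_split; apply: eq_bigr => q _.
by rewrite opcoefD leibnizDr.
Qed.

Lemma opmul_mono a b i j p q :
  opmul dx dy (mono a i j) (mono b p q) = leibniz a b i j p q.
Proof.
pose B := (size_bound (mono a i j) + size_bound (mono b p q) + i + j + p + q).+1.
rewrite (opmulE (B := B)); try (rewrite /B; lia).
transitivity (\sum_(i' < B) \sum_(j' < B | true) if (i == i') && (j == j') then
    \sum_(p' < B) \sum_(q' < B | true)
      (if (p == p') && (q == q') then leibniz a b i' j' p' q' else 0) else 0).
  apply: eq_bigr => i' _; apply: eq_bigr => j' _.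
  rewrite opcoef_mono (eq_sym (i' : nat)) (eq_sym (j' : nat)); case: ifP => _; last first.
    by rewrite big1 // => p' _; rewrite big1 // => q' _; rewrite leibniz0l.
  apply: eq_bigr => p' _; apply: eq_bigr => q' _.
  by rewrite opcoef_mono (eq_sym (p' : nat)) (eq_sym (q' : nat)); case: ifP; rewrite ?leibniz0r.
rewrite (@sum2_delta _ B (fun=> B) (fun _ _ => true) (fun i' j' => \sum_(p' < B)
  \sum_(q' < B | true) (if (p == p') && (q == q') then leibniz a b i' j' p' q' else 0))).
rewrite (@sum2_delta _ B (fun=> B) (fun _ _ => true) (fun p' q' => leibniz a b i j p' q')).
by have [-> -> -> ->] : [/\ i < B, j < B, p < B & q < B]%N by rewrite /B; split; lia.
Qed.

Lemma opmul_const_mono c b p q : opmul dx dy (mono c 0 0) (mono b p q) = mono (c * b) p q.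
Proof. by rewrite opmul_mono /leibniz !big_ord1 /= !mulr1. Qed.

Lemma opmul_pX_mono b p q :
  opmul dx dy (pX K) (mono b p q) = mono (dx b) p q + mono b p.+1 q.
Proof. by rewrite opmul_mono /leibniz big_ord_recr /= !big_ord1 /= !mulr1 !mul1r. Qed.

Lemma opmul_pY_mono b p q :
  opmul dx dy (pY K) (mono b p q) = mono (dy b) p q + mono b p q.+1.
Proof.
by rewrite opmul_mono /leibniz !big_ord1 big_ord_recr /= big_ord1 /= !mulr1 !mul1r add1n.
Qed.

End Composition.


Section Order3.
Variable K : fieldType.

Definition op3 (b30 b21 b12 b03 b20 b11 b02 b10 b01 b00 : K) : op K :=
  mono b30 3 0 + mono b21 2 1 + mono b12 1 2 + mono b03 0 3
  + mono b20 2 0 + mono b11 1 1 + mono b02 0 2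
  + mono b10 1 0 + mono b01 0 1 + mono b00 0 0.

Lemma op3B b30 b21 b12 b03 b20 b11 b02 b10 b01 b00
           c30 c21 c12 c03 c20 c11 c02 c10 c01 c00 :
  op3 b30 b21 b12 b03 b20 b11 b02 b10 b01 b00
  - op3 c30 c21 c12 c03 c20 c11 c02 c10 c01 c00
  = op3 (b30 - c30) (b21 - c21) (b12 - c12) (b03 - c03) (b20 - c20) (b11 - c11)
        (b02 - c02) (b10 - c10) (b01 - c01) (b00 - c00).
Proof. rewrite /op3 !monoB; ring. Qed.

Lemma opcoef_op3 b30 b21 b12 b03 b20 b11 b02 b10 b01 b00 u v :
  opcoef (op3 b30 b21 b12 b03 b20 b11 b02 b10 b01 b00) u v =
  match u, v with
  | 3, 0 => b30 | 2, 1 => b21 | 1, 2 => b12 | 0, 3 => b03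
  | 2, 0 => b20 | 1, 1 => b11 | 0, 2 => b02
  | 1, 0 => b10 | 0, 1 => b01 | 0, 0 => b00
  | _, _ => 0
  end.
Proof.
rewrite /op3 !opcoefD !opcoef_mono.
by case: u v => [|[|[|[|u]]]] [|[|[|[|v]]]] /=; rewrite ?(addr0, add0r).
Qed.

Lemma op3_order1 b10 b01 b00 :
  op3 0 0 0 0 0 0 0 b10 b01 b00 = mono b10 1 0 + mono b01 0 1 + mono b00 0 0.
Proof. by rewrite /op3 !mono0 !add0r. Qed.

#[local] Opaque op3.

Lemma op3_inj b30 b21 b12 b03 b20 b11 b02 b10 b01 b00
              c30 c21 c12 c03 c20 c11 c02 c10 c01 c00 :
  op3 b30 b21 b12 b03 b20 b11 b02 b10 b01 b00
  = op3 c30 c21 c12 c03 c20 c11 c02 c10 c01 c00 ->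
  [/\ b30 = c30, b21 = c21, b12 = c12, b03 = c03 & b20 = c20]
  /\ [/\ b11 = c11, b02 = c02, b10 = c10, b01 = c01 & b00 = c00].
Proof.
move=> eqbc; have coef u v := congr1 (fun M => opcoef M u v) eqbc.
move: (coef 3 0)%N (coef 2 1)%N (coef 1 2)%N (coef 0 3)%N (coef 2 0)%N.
move: (coef 1 1)%N (coef 0 2)%N (coef 1 0)%N (coef 0 1)%N (coef 0 0)%N.
by rewrite /= !opcoef_op3.
Qed.

End Order3.

Section Factorization.
Variables (K : fieldType) (dx dy : K -> K).
Implicit Types (M L R : op K).

Lemma has_fact_type_order12 (S1 S2 : op K) M i1 j1 i2 j2 :
  homog 1 S1 -> opcoef S1 i1 j1 != 0 -> homog 2 S2 -> opcoef S2 i2 j2 != 0 ->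
  has_fact_type dx dy S1 S2 M <->
  exists c e10 e01 e00, M = opmul dx dy (S1 + mono c 0 0)
                                 (S2 + mono e10 1 0 + mono e01 0 1 + mono e00 0 0).
Proof.
move=> h1 nz1 h2 nz2; split.
  case=> F1 [F2 [-> [/(Sym_eq_order1 _ h1 nz1)[c ->]]]].
  by case/(Sym_eq_order2 _ h2 nz2) => e10 [e01 [e00 ->]]; exists c, e10, e01, e00.
case=> c [e10 [e01 [e00 ->]]]; do 2 eexists; split; first by [].
split; first by apply/(Sym_eq_order1 _ h1 nz1); exists c.
by apply/(Sym_eq_order2 _ h2 nz2); exists e10, e01, e00.
Qed.

Lemma ord_le_refl o : ord_le o o.
Proof. by case: o => /=. Qed.

(* As [ordn R <= 1], only constant competitors [mono r 0 0] can have smaller order. *)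
Lemma common_obstacle_ord1 (S1 S2 : op K) L R : (ordn R <= 1)%N ->
  has_fact_type dx dy S1 S2 (L - R) ->
  (forall r, has_fact_type dx dy S1 S2 (L - mono r 0 0) -> R = mono r 0 0) ->
  common_obstacle dx dy S1 S2 L R.
Proof.
move=> ordR factR minR; split=> // R' factR'.
have [ordR'0|] := eqVneq (ordn R') 0%N.
  have R'E : R' = mono (opcoef R' 0 0) 0 0.
    by apply: ord_lt1E; rewrite -ordR'0; apply: ord_lt_ordn.
  by rewrite R'E in factR'; rewrite (minR _ factR') -R'E ord_le_refl.
rewrite -lt0n => ordR'_gt0; have nzR' : R' != 0.
  by apply: contraTneq ordR'_gt0 => ->; rewrite ordn0.
by rewrite /ord (negbTE nzR'); case: (R == 0) => //=; apply: leq_trans ordR ordR'_gt0.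
Qed.

End Factorization.

Section Obstacles.
Variables (K : fieldType) (dx dy : K -> K).
Hypotheses (hdx : is_derivation dx) (hdy : is_derivation dy).

Lemma homog_pX : homog 1 (pX K). Proof. exact: homog_mono. Qed.
Lemma homog_pY : homog 1 (pY K). Proof. exact: homog_mono. Qed.

Lemma opcoef_pX : opcoef (pX K) 1 0 != 0.
Proof. by rewrite opcoef_mono oner_eq0. Qed.

Lemma opcoef_pY : opcoef (pY K) 0 1 != 0.
Proof. by rewrite opcoef_mono oner_eq0. Qed.

Lemma opmul_X_YXpY c e10 e01 e00 :
  opmul dx dy (pX K + mono c 0 0)
    (pY K * pX K + pY K * pY K + mono e10 1 0 + mono e01 0 1 + mono e00 0 0)
  = op3 0 1 1 0 e10 (e01 + c) c (dx e10 + e00 + c * e10) (dx e01 + c * e01)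
        (dx e00 + c * e00).
Proof.
rewrite /pY /pX !mono_mul !mulr1 (opmulDl hdx hdy) !(opmulDr hdx hdy).
rewrite !(opmul_pX_mono hdx hdy) !(opmul_const_mono hdx hdy) (der1 hdx).
by rewrite /op3 !monoD !mono0 !mulr1; ring.
Qed.

Lemma has_fact_type_X_YXpY M :
  has_fact_type dx dy (pX K) (pY K * pX K + pY K * pY K) M <->
  exists c e10 e01 e00, M = op3 0 1 1 0 e10 (e01 + c) c (dx e10 + e00 + c * e10)
                                (dx e01 + c * e01) (dx e00 + c * e00).
Proof.
have homogS : homog 2 (pY K * pX K + pY K * pY K).
  by rewrite /pX /pY !mono_mul; apply: homogD; apply: homog_mono.
have nzS : opcoef (pY K * pX K + pY K * pY K) 1 1 != 0.
  by rewrite /pX /pY !mono_mul opcoefD !opcoef_mono /= addr0 mulr1 oner_eq0.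
rewrite (has_fact_type_order12 _ _ _ homog_pX opcoef_pX homogS nzS).
by split=> -[c [e10 [e01 [e00 ->]]]]; exists c, e10, e01, e00; rewrite opmul_X_YXpY.
Qed.

Ltac der_simpl := rewrite ?(derD hdx, derN hdx, derM hdx, derD hdy, derN hdy, derM hdy).

Lemma common_obstacle_XYXpY a20 a11 a02 a10 a01 a00 :
  common_obstacle dx dy (pX K) (pY K * pX K + pY K * pY K)
    (hat (pX K * pY K * (pX K + pY K)) + mono a20 2 0 + mono a11 1 1 + mono a02 0 2
     + mono a10 1 0 + mono a01 0 1 + mono a00 0 0)
    (mono (a02 ^+ 2 - a11 * a02 + a01 + dx (a02 - a11)) 0 1
     + mono (a00 - a02 * a10 + a02 ^+ 2 * a20 + 2 * a02 * dx a20 - dx a10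
             + a20 * dx a02 + dx (dx a20)) 0 0).
Proof.
set L := hat _ + _ + _ + _ + _ + _ + _; set R := (X in common_obstacle _ _ _ _ _ X).
have LE : L = op3 0 1 1 0 a20 a11 a02 a10 a01 a00.
  by rewrite /L /hat /pX /pY !mono_mul mulrDr !mono_mul /op3 !mono0 !mulr1; ring.
have RE : R = op3 0 0 0 0 0 0 0 0 (a02 ^+ 2 - a11 * a02 + a01 + dx (a02 - a11))
  (a00 - a02 * a10 + a02 ^+ 2 * a20 + 2 * a02 * dx a20 - dx a10 + a20 * dx a02 + dx (dx a20)).
  by rewrite op3_order1 mono0 add0r.
apply: common_obstacle_ord1.
- by apply: ordn_ord_lt; apply: ord_ltD; apply: ord_lt_mono.
- apply/has_fact_type_X_YXpY.
  exists a02, a20, (a11 - a02), (a10 - dx a20 - a02 * a20).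
  by rewrite LE RE op3B; f_equal; der_simpl; ring.
move=> r; rewrite (_ : mono r 0 0 = op3 0 0 0 0 0 0 0 0 0 r); last first.
  by rewrite op3_order1 !mono0 !add0r.
case/has_fact_type_X_YXpY=> c [e10 [e01 [e00]]].
rewrite LE RE op3B !subr0 => /op3_inj[[_ _ _ _ ->] [-> -> -> ->]] /eqP.
by rewrite subr_eq => /eqP ->; f_equal; der_simpl; ring.
Qed.

Lemma opmul_Y_XX c e10 e01 e00 :
  opmul dx dy (pY K + mono c 0 0) (pX K * pX K + mono e10 1 0 + mono e01 0 1 + mono e00 0 0)
  = op3 0 1 0 0 c e10 e01 (dy e10 + c * e10) (dy e01 + e00 + c * e01) (dy e00 + c * e00).
Proof.
rewrite /pY /pX !mono_mul !mulr1 (opmulDl hdx hdy) !(opmulDr hdx hdy).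
rewrite !(opmul_pY_mono hdx hdy) !(opmul_const_mono hdx hdy) (der1 hdy).
by rewrite /op3 !monoD !mono0 !mulr1; ring.
Qed.

Lemma has_fact_type_Y_XX M :
  has_fact_type dx dy (pY K) (pX K * pX K) M <->
  exists c e10 e01 e00, M = op3 0 1 0 0 c e10 e01 (dy e10 + c * e10)
                                (dy e01 + e00 + c * e01) (dy e00 + c * e00).
Proof.
have homogS : homog 2 (pX K * pX K) by rewrite /pX mono_mul; apply: homog_mono.
have nzS : opcoef (pX K * pX K) 2 0 != 0.
  by rewrite /pX mono_mul opcoef_mono /= mulr1 oner_eq0.
rewrite (has_fact_type_order12 _ _ _ homog_pY opcoef_pY homogS nzS).
by split=> -[c [e10 [e01 [e00 ->]]]]; exists c, e10, e01, e00; rewrite opmul_Y_XX.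
Qed.

Lemma common_obstacle_XXY a20 a11 a02 a10 a01 a00 :
  common_obstacle dx dy (pY K) (pX K * pX K)
    (hat (pX K ^+ 2 * pY K) + mono a20 2 0 + mono a11 1 1 + mono a02 0 2
     + mono a10 1 0 + mono a01 0 1 + mono a00 0 0)
    (mono (a10 - a20 * a11 - dy a11) 1 0
     + mono (a00 - a20 * a01 + a20 ^+ 2 * a02 + 2 * a20 * dy a02 - dy a01
             + a02 * dy a20 + dy (dy a02)) 0 0).
Proof.
set L := hat _ + _ + _ + _ + _ + _ + _; set R := (X in common_obstacle _ _ _ _ _ X).
have LE : L = op3 0 1 0 0 a20 a11 a02 a10 a01 a00.
  by rewrite /L /hat /pX /pY expr2 !mono_mul /op3 !mono0 !mulr1; ring.
have RE : R = op3 0 0 0 0 0 0 0 (a10 - a20 * a11 - dy a11) 0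
  (a00 - a20 * a01 + a20 ^+ 2 * a02 + 2 * a20 * dy a02 - dy a01 + a02 * dy a20 + dy (dy a02)).
  by rewrite op3_order1 mono0 addr0.
apply: common_obstacle_ord1.
- by apply: ordn_ord_lt; apply: ord_ltD; apply: ord_lt_mono.
- apply/has_fact_type_Y_XX.
  exists a20, a11, a02, (a01 - dy a02 - a20 * a02).
  by rewrite LE RE op3B; f_equal; der_simpl; ring.
move=> r; rewrite (_ : mono r 0 0 = op3 0 0 0 0 0 0 0 0 0 r); last first.
  by rewrite op3_order1 !mono0 !add0r.
case/has_fact_type_Y_XX=> c [e10 [e01 [e00]]].
rewrite LE RE op3B !subr0 => /op3_inj[[_ _ _ _ ->] [-> -> -> ->]] /eqP.
by rewrite subr_eq => /eqP ->; f_equal; der_simpl; ring.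
Qed.

End Obstacles.

Theorem mainTheorem13 (K : fieldType) (dx dy : K -> K)
  (hdx : is_derivation dx) (hdy : is_derivation dy)
  (hcomm : forall a, dx (dy a) = dy (dx a))
  (a20 a11 a02 a10 a01 a00 : K) :
  (let SymL := pX K * pY K * (pX K + pY K) in
   let L := hat SymL + mono a20 2 0 + mono a11 1 1 + mono a02 0 2
            + mono a10 1 0 + mono a01 0 1 + mono a00 0 0 in
   common_obstacle dx dy (pX K) (pY K * pX K + pY K * pY K) L
     (mono (a02 ^+ 2 - a11 * a02 + a01 + dx (a02 - a11)) 0 1
      + mono (a00 - a02 * a10 + a02 ^+ 2 * a20 + 2 * a02 * dx a20 - dx a10
              + a20 * dx a02 + dx (dx a20)) 0 0))
  /\
  (let SymL := pX K ^+ 2 * pY K in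
   let L := hat SymL + mono a20 2 0 + mono a11 1 1 + mono a02 0 2
            + mono a10 1 0 + mono a01 0 1 + mono a00 0 0 in
   common_obstacle dx dy (pY K) (pX K * pX K) L
     (mono (a10 - a20 * a11 - dy a11) 1 0
      + mono (a00 - a20 * a01 + a20 ^+ 2 * a02 + 2 * a20 * dy a02 - dy a01
              + a02 * dy a20 + dy (dy a02)) 0 0)).
Proof.
split; [exact: common_obstacle_XYXpY | exact: common_obstacle_XXY].
Qed.
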